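(* Let $(X_n)$ be a finite Markov chain with transition matrix $P$ in which state $k$ is absorbing and, from every state, $k$ is reachable; all states other than $k$ are transient. Let $F^{k}=(I-P_{\mathcal T\mathcal T})^{-1}$, $\mathcal T$ the set of states other than $k$, be its fundamental matrix. Let $s,m,t$ be states different from $k$ with $s\neq t$, $m\neq t$ and $F^k_{st}>0$. Then the avoidance fundamental matrix satisfies $$F_{sm}^{\{t,\overline{k}\}}=F_{mt}^k\left(\frac{F_{sm}^k}{F_{st}^k}-\frac{F_{tm}^k}{F_{tt}^k}\right).$$
   Context: For a finite Markov chain with transition matrix $P$ and a set $\mathcal A$ of states made absorbing (their rows replaced by unit rows), with transient set $\mathcal T$ (complement of $\mathcal A$) from which $\mathcal A$ is reachable, the fundamental matrix is $F^{\mathcal A}=(I-P_{\mathcal T\mathcal T})^{-1}$; $F^{\mathcal A}_{sm}$ is the expected number of visits to $m$ starting from $s$ before absorption. For $t\in\mathcal A$, $Q_s^{\{t,\overline{\mathcal A\setminus\{t\}}\}}$ denotes the probability that the chain started at $s$ is absorbed at $t$ (i.e. the first absorbing state hit is $t$). For two states $t,k$, the avoidance fundamental matrix is defined by $F^{\{t,\overline{k}\}}_{sm}=F^{\{t,k\}}_{sm}\,\dfrac{Q_m^{\{t,\overline{k}\}}}{Q_s^{\{t,\overline{k}\}}}$, where $F^{\{t,k\}}$ is the fundamental matrix with absorbing set $\{t,k\}$ and $Q^{\{t,\overline k\}}_x$ is the probability that, with absorbing set $\{t,k\}$, the chain from $x$ is absorbed at $t$. *)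

From HB Require Import structures.
From mathcomp Require Import all_boot all_order all_algebra.
Set Implicit Arguments. Unset Strict Implicit. Unset Printing Implicit Defensive.
Import Order.TTheory GRing.Theory Num.Theory.
Local Open Scope ring_scope.

Section Markov.
Variables (R : realFieldType) (n : nat).

Definition stochastic (P : 'M[R]_n) : Prop :=
  (forall i j, 0 <= P i j) /\ (forall i, \sum_j P i j = 1).

Definition step (P : 'M[R]_n) : rel 'I_n := fun i j => 0 < P i j.

Definition subTT (P : 'M[R]_n) (A : {set 'I_n}) : 'M[R]_(#|~: A|) :=
  \matrix_(i, j) P (enum_val i) (enum_val j).

Definition fundmx (P : 'M[R]_n) (A : {set 'I_n}) : 'M[R]_(#|~: A|) :=
  invmx (1%:M - subTT P A).

(* the entry F^A_{sm} for states s, m of T (0 if s or m not transient) *)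
Definition Fent (P : 'M[R]_n) (A : {set 'I_n}) (s m : 'I_n) : R :=
  match [pick i : 'I_#|~: A| | enum_val i == s],
        [pick j : 'I_#|~: A| | enum_val j == m] with
  | Some i, Some j => fundmx P A i j
  | _, _ => 0
  end.

(* absorption probability Q_s^{t, bar(A\{t})}: probability that the chain
   started at s is first absorbed in t.  For transient s this is the
   standard formula (F^A R)_{st} = sum_{m in T} F^A_{sm} P_{mt};
   for s in A it is [s == t]. *)
Definition Qabs (P : 'M[R]_n) (A : {set 'I_n}) (t s : 'I_n) : R :=
  if s \in A then (s == t)%:R
  else \sum_(m | m \notin A) Fent P A s m * P m t.

Definition Favoid (P : 'M[R]_n) (t k s m : 'I_n) : R :=
  Fent P [set t; k] s m * Qabs P [set t; k] t m / Qabs P [set t; k] t s.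

End Markov.

(* Write F = F^{k}.  Making t absorbing as well deletes row and column t of
   I - P_TT, so by a rank-one (Schur complement) update
   F^{t,k}_{xy} = F_{xy} - F_{xt} F_{ty} / F_{tt}; summing this against the last
   step into t gives Q^{t,k}_x = F_{xt} / F_{tt}, and the formula follows by
   substituting both into the definition of F^{t, bar k}.  That I - P_TT is
   invertible and that F_{tt} <> 0 both come from the maximum principle: a
   function that is harmonic off a set containing the reachable state k and
   vanishes on that set is identically zero. *)

From HB Require Import structures.
From mathcomp Require Import all_boot all_order all_algebra.
From mathcomp Require Import ring.
Set Implicit Arguments. Unset Strict Implicit. Unset Printing Implicit Defensive.
Import Order.TTheory GRing.Theory Num.Theory.
Local Open Scope ring_scope.

Section Sums.
Variables (R : pzRingType) (T : finType).

Lemma sum_delta_subl (x : T) (a f : T -> R) :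
  \sum_z ((x == z)%:R - a z) * f z = f x - \sum_z a z * f z.
Proof.
under eq_bigr do rewrite mulrBl.
rewrite sumrB (bigD1 x) //= eqxx mul1r big1 ?addr0 // => z zx.
by rewrite eq_sym (negbTE zx) mul0r.
Qed.

Lemma sum_delta_subr (y : T) (a f : T -> R) :
  \sum_z f z * ((z == y)%:R - a z) = f y - \sum_z f z * a z.
Proof.
under eq_bigr do rewrite mulrBr.
rewrite sumrB (bigD1 y) //= eqxx mulr1 big1 ?addr0 // => z zy.
by rewrite (negbTE zy) mulr0.
Qed.

Lemma sum_notinE (B : {set T}) (f : T -> R) :
  (forall z, z \in B -> f z = 0) -> \sum_(z | z \notin B) f z = \sum_z f z.
Proof.
by move=> f0; rewrite big_mkcond; apply: eq_bigr => z _; case: ifPn => // /negPn/f0.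
Qed.

End Sums.

Section FundamentalMatrix.
Variables (R : realFieldType) (n : nat) (P : 'M[R]_n) (A : {set 'I_n}).

Lemma enum_val_notin (i : 'I_#|~: A|) : enum_val i \notin A.
Proof. by have := enum_valP i; rewrite inE. Qed.

Lemma enum_val_compl x : x \notin A -> exists i : 'I_#|~: A|, x = enum_val i.
Proof. by rewrite -in_setC => xA; exists (enum_rank_in xA x); rewrite enum_rankK_in. Qed.

Lemma sum_enum_val_compl (f : 'I_n -> R) :
  (forall z, z \in A -> f z = 0) -> \sum_(i < #|~: A|) f (enum_val i) = \sum_z f z.
Proof.
move=> f0; rewrite -(big_enum_val (A := mem (~: A))) -(sum_notinE (B := A)) //.
by apply: eq_bigl => z; rewrite inE.
Qed.

Lemma onemx_subTTE i j :
  (1%:M - subTT P A) i j = (enum_val i == enum_val j)%:R - P (enum_val i) (enum_val j).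
Proof. by rewrite !mxE (inj_eq enum_val_inj). Qed.

Lemma Fent_enum_val i j : Fent P A (enum_val i) (enum_val j) = fundmx P A i j.
Proof.
rewrite /Fent; case: pickP => [i' /eqP/enum_val_inj -> | /(_ i)]; last by rewrite eqxx.
by case: pickP => [j' /eqP/enum_val_inj -> | /(_ j)]; last by rewrite eqxx.
Qed.

Lemma Fent0l s m : s \in A -> Fent P A s m = 0.
Proof.
move=> sA; rewrite /Fent; case: pickP => // i /eqP iS.
by have := enum_val_notin i; rewrite iS sA.
Qed.

Lemma Fent0r s m : m \in A -> Fent P A s m = 0.
Proof.
move=> mA; rewrite /Fent; case: pickP => // i _; case: pickP => // j /eqP jM.
by have := enum_val_notin j; rewrite jM mA.
Qed.

Lemma Fent_unique (h : 'I_n -> 'I_n -> R) :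
  (forall z y, z \in A -> h z y = 0) ->
  (forall x y, x \notin A -> y \notin A ->
     \sum_z P x z * h z y = h x y - (x == y)%:R) ->
  forall x y, x \notin A -> y \notin A -> Fent P A x y = h x y.
Proof.
move=> h0 h_step x y /enum_val_compl[i ->] /enum_val_compl[j ->].
pose G : 'M[R]_#|~: A| := \matrix_(i, j) h (enum_val i) (enum_val j).
have invG : (1%:M - subTT P A) *m G = 1%:M.
  apply/matrixP => i' j'; rewrite [RHS]mxE -(inj_eq enum_val_inj) mxE.
  under eq_bigr do rewrite onemx_subTTE mxE.
  rewrite (sum_enum_val_compl (f := fun z =>
    ((enum_val i' == z)%:R - P (enum_val i') z) * h z (enum_val j'))); last first.
    by move=> z zA; rewrite h0 ?mulr0.
  by rewrite sum_delta_subl h_step ?enum_val_notin // opprB addrC subrK.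
have [unitX _] := mulmx1_unit invG.
rewrite Fent_enum_val (_ : fundmx P A = G) ?mxE //.
by rewrite /fundmx -[RHS](mulKmx unitX) invG mulmx1.
Qed.

Hypothesis fund_unit : (1%:M - subTT P A) \in unitmx.

Lemma Fent_first_step x y : x \notin A -> y \notin A ->
  \sum_z P x z * Fent P A z y = Fent P A x y - (x == y)%:R.
Proof.
move=> /enum_val_compl[i ->] /enum_val_compl[j ->].
have /matrixP/(_ i j) := mulmxV fund_unit.
rewrite [RHS]mxE -(inj_eq enum_val_inj) mxE -/(fundmx P A).
under eq_bigr do rewrite onemx_subTTE -Fent_enum_val.
rewrite (sum_enum_val_compl (f := fun z => ((enum_val i == z)%:R - P (enum_val i) z)
                                       * Fent P A z (enum_val j))); last first.
  by move=> z zA; rewrite Fent0l ?mulr0.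
by rewrite sum_delta_subl => <-; rewrite opprB addrC subrK.
Qed.

Lemma Fent_last_step x y : x \notin A -> y \notin A ->
  \sum_z Fent P A x z * P z y = Fent P A x y - (x == y)%:R.
Proof.
move=> /enum_val_compl[i ->] /enum_val_compl[j ->].
have /matrixP/(_ i j) := mulVmx fund_unit.
rewrite [RHS]mxE -(inj_eq enum_val_inj) mxE -/(fundmx P A).
under eq_bigr do rewrite onemx_subTTE -Fent_enum_val.
rewrite (sum_enum_val_compl (f := fun z => Fent P A (enum_val i) z
                                       * ((z == enum_val j)%:R - P z (enum_val j)))); last first.
  by move=> z zA; rewrite Fent0r ?mul0r.
by rewrite sum_delta_subr => <-; rewrite opprB addrC subrK.
Qed.

End FundamentalMatrix.

Section Absorption.
Variables (R : realFieldType) (n : nat) (P : 'M[R]_n) (k : 'I_n).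
Hypotheses (P_stoch : stochastic P) (reach_k : forall x, connect (step P) x k).

Lemma norm_harmonic_step (v : 'I_n -> R) x y :
  (forall z, `|v z| <= `|v x|) -> v x = \sum_z P x z * v z ->
  step P x y -> `|v y| = `|v x|.
Proof.
have [P_ge0 P_sum1] := P_stoch.
move=> vx_max vx_mean Pxy.
have gap_ge0 z : true -> 0 <= P x z * (`|v x| - `|v z|).
  by rewrite mulr_ge0 ?subr_ge0.
have gap_sum0 : \sum_z P x z * (`|v x| - `|v z|) = 0.
  apply/eqP; rewrite eq_le sumr_ge0 // andbT.
  under eq_bigr do rewrite mulrBr [P x _ * `|v x|]mulrC.
  rewrite sumrB -mulr_sumr P_sum1 mulr1 subr_le0 {1}vx_mean.
  apply: le_trans (ler_norm_sum _ _ _) _.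
  by apply: ler_sum => z _; rewrite normrM ger0_norm.
have /(_ y isT)/eqP := psumr_eq0P gap_ge0 gap_sum0.
rewrite mulf_eq0 subr_eq0 => /orP[/eqP Pxy0 | /eqP //].
by move: Pxy; rewrite /step Pxy0 ltxx.
Qed.

Lemma harmonic_eq0 (S : {set 'I_n}) (v : 'I_n -> R) :
  k \in S -> (forall x, x \in S -> v x = 0) ->
  (forall x, x \notin S -> v x = \sum_y P x y * v y) -> forall x, v x = 0.
Proof.
move=> kS v0 v_mean.
case: (@arg_maxP _ _ _ k predT (fun x => `|v x|) isT) => x0 _ x0_max.
pose M := `|v x0|.
suff M0 : M = 0.
  by move=> x; apply/eqP; rewrite -normr_le0 -M0; apply: x0_max.
have M_step x y : `|v x| = M -> step P x y -> `|v y| = M.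
  move=> vxM xy; have [xS | xS] := boolP (x \in S).
    move: vxM; rewrite v0 // normr0 => M0.
    by apply/eqP; rewrite eq_le -M0 normr_ge0 andbT M0; apply: x0_max.
  rewrite -vxM; apply: norm_harmonic_step (v_mean x xS) xy => z.
  by rewrite vxM; apply: x0_max.
have M_path x p : `|v x| = M -> path (step P) x p -> `|v (last x p)| = M.
  elim: p x => [|y p IH] x //= vxM /andP[xy yp].
  exact: IH (M_step _ _ vxM xy) yp.
have [p x0p k_last] := connectP (reach_k x0).
by have := M_path _ _ (erefl M) x0p; rewrite -k_last v0 // normr0.
Qed.

Lemma unitmx_fund (A : {set 'I_n}) : k \in A -> (1%:M - subTT P A) \in unitmx.
Proof.
move=> kA; rewrite unitmxE unitfE -det_tr; apply/det0P => -[w w_neq0 w_ker].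
(* [w] extended by zero on [A] is harmonic off [A]. *)
pose v z := \sum_i (enum_val i == z)%:R * w 0 i.
have v_enum i : v (enum_val i) = w 0 i.
  rewrite /v (bigD1 i) //= eqxx mul1r big1 ?addr0 // => j ji.
  by rewrite (inj_eq enum_val_inj) (negbTE ji) mul0r.
have v0 z : z \in A -> v z = 0.
  move=> zA; rewrite /v big1 // => i _; case: eqP => [iz | _]; last by rewrite mul0r.
  by have := enum_val_notin i; rewrite iz zA.
have v_mean x : x \notin A -> v x = \sum_y P x y * v y.
  move=> /enum_val_compl[j ->]; have /rowP/(_ j) := w_ker; rewrite mxE.
  under eq_bigr do rewrite !mxE mulrC.
  rewrite mxE sum_delta_subl => /eqP; rewrite subr_eq0 v_enum => /eqP ->.
  rewrite -(sum_enum_val_compl (A := A) (f := fun z => P (enum_val j) z * v z)); last first.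
    by move=> z /v0 ->; rewrite mulr0.
  by under [RHS]eq_bigr do rewrite v_enum.
have v_eq0 := harmonic_eq0 kA v0 v_mean.
by move/eqP: w_neq0; apply; apply/rowP => i; rewrite -v_enum v_eq0 mxE.
Qed.

Lemma Fent_diag_neq0 (A : {set 'I_n}) s t :
  k \in A -> Fent P A s t != 0 -> Fent P A t t != 0.
Proof.
move=> kA; apply: contra_neq => Ftt0.
have [tA | tA] := boolP (t \in A); first exact: Fent0r.
apply: (harmonic_eq0 (S := t |: A) (v := fun x => Fent P A x t)).
- by rewrite !inE kA orbT.
- by move=> x; rewrite !inE => /orP[/eqP -> // | /Fent0l ->].
- move=> x; rewrite !inE negb_or => /andP[xt xA].
  by rewrite Fent_first_step ?unitmx_fund // (negbTE xt) subr0.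
Qed.

Section DeleteState.
Variables (A : {set 'I_n}) (t : 'I_n).
Hypotheses (kA : k \in A) (tA : t \notin A) (Ftt : Fent P A t t != 0).

Lemma Fent_setU1 x y : x \notin t |: A -> y \notin t |: A ->
  Fent P (t |: A) x y
    = Fent P A x y - Fent P A x t * Fent P A t y / Fent P A t t.
Proof.
apply: (Fent_unique (h := fun x y =>
  Fent P A x y - Fent P A x t * Fent P A t y / Fent P A t t)) => [z {}y | {}x {}y].
  rewrite !inE => /orP[/eqP -> | zA]; first by rewrite mulrAC divff // mul1r subrr.
  by rewrite !(Fent0l P _ zA) !mul0r subr0.
rewrite !inE !negb_or => /andP[xt xA] /andP[yt yA].
under eq_bigr do rewrite mulrBr mulrA mulrA.
rewrite sumrB -!mulr_suml !Fent_first_step ?unitmx_fund // (negbTE xt).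
by rewrite subr0; ring.
Qed.

Lemma Qabs_setU1 x : x \notin t |: A ->
  Qabs P (t |: A) t x = Fent P A x t / Fent P A t t.
Proof.
move=> xtA; rewrite /Qabs (negbTE xtA).
under eq_bigr => y ytA do rewrite Fent_setU1 //.
rewrite sum_notinE => [|y]; last first.
  rewrite !inE => /orP[/eqP -> | yA]; first by rewrite mulfK // subrr mul0r.
  by rewrite !(Fent0r P _ yA) mulr0 !mul0r subrr mul0r.
have [xt xA] : x != t /\ x \notin A by apply/andP; rewrite -negb_or -in_setU1.
rewrite (eq_bigr (fun y => Fent P A x y * P y t
                   - Fent P A x t / Fent P A t t * (Fent P A t y * P y t))) => [|y _]; last by ring.
rewrite sumrB -mulr_sumr !Fent_last_step ?unitmx_fund // (negbTE xt) eqxx.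
by rewrite subr0 /=; field.
Qed.

End DeleteState.

End Absorption.

Theorem mainTheorem1 (R : realFieldType) (n : nat) (P : 'M[R]_n)
    (k s m t : 'I_n) :
  stochastic P ->
  P k k = 1 ->
  (forall x : 'I_n, connect (step P) x k) ->
  s != k -> m != k -> t != k -> s != t -> m != t ->
  0 < Fent P [set k] s t ->
  Favoid P t k s m =
    Fent P [set k] m t *
      (Fent P [set k] s m / Fent P [set k] s t
       - Fent P [set k] t m / Fent P [set k] t t).
Proof.
move=> P_stoch _ reach_k sk mk tk st mt /lt0r_neq0 Fst.
have kk : k \in [set k] := set11 k.
have tk' : t \notin [set k] by rewrite in_set1.
have Ftt := Fent_diag_neq0 P_stoch reach_k kk Fst.
have notin_tk x : x != t -> x != k -> x \notin [set t; k].
  by move=> xt xk; rewrite !inE negb_or xt xk.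
rewrite /Favoid (Fent_setU1 P_stoch reach_k kk tk' Ftt)
  ?(Qabs_setU1 P_stoch reach_k kk tk' Ftt) ?notin_tk //.
by field; rewrite Ftt Fst.
Qed.
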